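(* A graph $G$ has exactly one L-Grundy dominating set (i.e., is a unique L-Grundy domination graph) if and only if $\gamma_{gr}^{L}(G)=n(G)$, where $n(G)$ is the number of vertices of $G$.
   Context: For a graph $G$, $N(v)$ is the open neighborhood and $N[v]=N(v)\cup\{v\}$ the closed neighborhood of $v$. A sequence $(v_1,\ldots,v_k)$ of distinct vertices is an L-sequence if $N[v_i]\setminus\bigcup_{j=1}^{i-1}N(v_j)\neq\emptyset$ for each $i\in[k]$. The L-Grundy domination number $\gamma_{gr}^{L}(G)$ is the maximum length of an L-sequence; the vertex set of such a maximum-length L-sequence is an L-Grundy dominating set. *)

From mathcomp Require Import all_boot.
Set Implicit Arguments. Unset Strict Implicit. Unset Printing Implicit Defensive.

Definition simple_graph (T : finType) (e : rel T) : Prop :=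
  symmetric e /\ irreflexive e.

Section LGrundy.
Variables (T : finType) (e : rel T).

Definition openN (v : T) : {set T} := [set u | e v u].
Definition closedN (v : T) : {set T} := v |: openN v.

(* (v_1,...,v_k) is an L-sequence: distinct vertices with
   N[v_i] \ (N(v_1) u ... u N(v_{i-1})) nonempty for every i. *)
Definition is_Lseq (s : seq T) : bool :=
  uniq s &&
  [forall i : 'I_(size s),
     closedN (tnth (in_tuple s) i)
       :\: (\bigcup_(j : 'I_(size s) | j < i) openN (tnth (in_tuple s) j))
     != set0].

(* L-Grundy domination number: maximum length of an L-sequence.
   (Since L-sequences have distinct entries, their length is at most #|T|,
   so maximizing over lengths k <= #|T| is the maximum over all of them.) *)
Definition gamma_grL : nat :=
  \max_(k < #|T|.+1 | [exists t : k.-tuple T, is_Lseq t]) k.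

Definition is_LGrundy_dom_set (A : {set T}) : bool :=
  [exists t : gamma_grL.-tuple T, is_Lseq t && ([set x in t] == A)].

End LGrundy.

From mathcomp Require Import all_boot.
Set Implicit Arguments. Unset Strict Implicit. Unset Printing Implicit Defensive.

(* If every maximum L-sequence uses all vertices, every L-Grundy dominating set
   is the whole vertex set.  Otherwise take a maximum L-sequence s and a vertex
   u outside it.  By maximality N[u] is covered by the open neighbourhoods of s;
   if s_i is the first vertex of s at which N[u] becomes covered, replacing s_i
   by u gives another maximum L-sequence, whose vertex set contains u and hence
   differs from that of s. *)

Section LSequences.
Variables (T : finType) (e : rel T).

(* The L-sequence condition for [s] when the open neighbourhoods of the
   vertices played before [s] cover [U]. *)
Fixpoint Lseq_after (U : {set T}) (s : seq T) : bool :=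
  if s is x :: s' then (closedN e x :\: U != set0) && Lseq_after (U :|: openN e x) s'
  else true.

Lemma Lseq_after_cat U s1 s2 :
  Lseq_after U (s1 ++ s2) =
  Lseq_after U s1 && Lseq_after (U :|: \bigcup_(y <- s1) openN e y) s2.
Proof.
elim: s1 U => [|x s1 IH] U /=; first by rewrite big_nil setU0.
by rewrite IH big_cons setUA andbA.
Qed.

Lemma Lseq_after_subset (U V : {set T}) s :
  V \subset U -> Lseq_after U s -> Lseq_after V s.
Proof.
elim: s U V => [|x s IH] U V //= VU /andP[xU sU]; apply/andP; split.
  by apply: contra xU; rewrite !setD_eq0 => /subset_trans; apply.
by apply: IH sU; apply: setSU.
Qed.

Lemma Lseq_after_nth (x0 : T) U s :
  Lseq_after U s =
  all (fun i => closedN e (nth x0 s i)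
                  :\: (U :|: \bigcup_(y <- take i s) openN e y) != set0)
      (iota 0 (size s)).
Proof.
elim: s U => [|x s IH] U //=.
rewrite big_nil setU0 IH -(addn0 1) iotaDl all_map; congr andb.
by apply: eq_all => i /=; rewrite big_cons setUA.
Qed.

Lemma bigcup_openN_take (x0 : T) s i : i <= size s ->
  \bigcup_(j : 'I_(size s) | j < i) openN e (tnth (in_tuple s) j)
  = \bigcup_(y <- take i s) openN e y.
Proof.
move=> le_i_s; rewrite (big_nth x0) size_takel // big_mkord.
rewrite (big_ord_widen_cond _ xpredT (fun j => openN e (nth x0 (take i s) j)) le_i_s).
by apply: eq_big => [|j lt_j_i] //; rewrite (tnth_nth x0) nth_take.
Qed.

Lemma is_LseqE s : is_Lseq e s = uniq s && Lseq_after set0 s.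
Proof.
rewrite /is_Lseq; congr andb; case: s => [|x0 s]; first by apply/forallP => -[].
rewrite (Lseq_after_nth x0); apply/forallP/allP => [Hs i|Hs i].
  rewrite mem_iota add0n => lt_i_s.
  have := Hs (Ordinal lt_i_s).
  by rewrite (@bigcup_openN_take x0 (x0 :: s) i (ltnW lt_i_s)) (tnth_nth x0) set0U.
have := Hs i; rewrite mem_iota /= => /(_ (ltn_ord i)).
by rewrite (bigcup_openN_take x0 (ltnW (ltn_ord i))) (tnth_nth x0) set0U.
Qed.

Lemma Lseq_uniq s : is_Lseq e s -> uniq s.
Proof. by rewrite is_LseqE => /andP[]. Qed.

Lemma size_Lseq_le_card s : is_Lseq e s -> size s <= #|T|.
Proof. by move/Lseq_uniq/card_uniqP <-; apply: max_card. Qed.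

Lemma size_Lseq_le_gamma s : is_Lseq e s -> size s <= gamma_grL e.
Proof.
move=> Ls; have lt_s_T : size s < #|T|.+1 by rewrite ltnS size_Lseq_le_card.
apply: (@leq_bigmax_cond _ _ (fun k : 'I_#|T|.+1 => nat_of_ord k) (Ordinal lt_s_T)).
by apply/existsP; exists (in_tuple s).
Qed.

Lemma exists_Lseq_gamma : exists t : (gamma_grL e).-tuple T, is_Lseq e t.
Proof.
have : 0 < #|[pred k : 'I_#|T|.+1 | [exists t : k.-tuple T, is_Lseq e t]]|.
  apply/card_gt0P; exists ord0; rewrite inE; apply/existsP.
  by exists [tuple]; rewrite is_LseqE.
case/(eq_bigmax_cond (fun k : 'I_#|T|.+1 => nat_of_ord k)) => k.
by rewrite inE /gamma_grL => /existsP + ->.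
Qed.

Lemma gamma_grL_le_card : gamma_grL e <= #|T|.
Proof.
by have [t /size_Lseq_le_card] := exists_Lseq_gamma; rewrite size_tuple.
Qed.

Lemma LGrundy_dom_set_of_Lseq s :
  is_Lseq e s -> size s = gamma_grL e -> is_LGrundy_dom_set e [set x in s].
Proof.
move=> Ls /eqP size_s; apply/existsP; exists (Tuple size_s).
by rewrite Ls eqxx.
Qed.

Lemma closedN_covered s u :
  is_Lseq e s -> size s = gamma_grL e -> u \notin s ->
  closedN e u \subset \bigcup_(y <- s) openN e y.
Proof.
move=> Ls size_s u_notin_s; rewrite -setD_eq0; apply: contraT => u_free.
have : is_Lseq e (rcons s u).
  move: Ls; rewrite !is_LseqE -cats1 cat_uniq Lseq_after_cat => /andP[-> ->] /=.
  by rewrite set0U u_free orbF u_notin_s.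
by move/size_Lseq_le_gamma; rewrite size_rcons size_s ltnn.
Qed.

Lemma Lseq_after_replace U s1 v s2 u :
  Lseq_after U (s1 ++ v :: s2) ->
  ~~ (closedN e u \subset U :|: \bigcup_(y <- s1) openN e y) ->
  openN e u \subset U :|: \bigcup_(y <- s1) openN e y :|: openN e v ->
  Lseq_after U (s1 ++ u :: s2).
Proof.
rewrite !Lseq_after_cat /= => /and3P[-> _ Ls2] u_free u_covered.
rewrite setD_eq0 u_free; apply: Lseq_after_subset Ls2.
by rewrite subUset subsetUl.
Qed.

Lemma Lseq_exchange s u :
  is_Lseq e s -> u \notin s -> closedN e u \subset \bigcup_(y <- s) openN e y ->
  exists s', [/\ is_Lseq e s', size s' = size s & u \in s'].
Proof.
rewrite is_LseqE => /andP[uniq_s Ls] u_notin_s covered.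
pose P i := closedN e u \subset \bigcup_(y <- take i s) openN e y.
have exP : exists i, P i by exists (size s); rewrite /P take_size.
have u_closedN : u \in closedN e u by rewrite setU11.
case: (ex_minnP exP) => -[|j]; rewrite /P.
  by rewrite take0 big_nil subset0 => /eqP u_none; rewrite u_none inE in u_closedN.
move=> Pj minj.
have notPj : ~~ P j by apply/negP => /minj; rewrite ltnn.
have lt_j_s : j < size s.
  by rewrite ltnNge; apply: contra notPj => le_s_j; rewrite /P take_oversize.
have sE : s = take j s ++ nth u s j :: drop j.+1 s by rewrite -drop_nth ?cat_take_drop.
exists (take j s ++ u :: drop j.+1 s); split; last by rewrite mem_cat mem_head orbT.
- rewrite is_LseqE; apply/andP; split.
    move: uniq_s u_notin_s; rewrite {1 2}sE !cat_uniq !cons_uniq !mem_cat !in_cons !negb_or.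
    by case/and4P=> -> /andP[_ ->] _ -> /and3P[-> _ ->].
  rewrite {1}sE in Ls; apply: Lseq_after_replace Ls _ _; rewrite set0U //.
  apply: subset_trans (subsetUr [set u] _) _; move: Pj.
  by rewrite (take_nth u) // -cats1 big_cat big_seq1.
- by rewrite {3}sE !size_cat.
Qed.

Lemma LGrundy_dom_set_exists : exists A, is_LGrundy_dom_set e A.
Proof.
have [t Lt] := exists_Lseq_gamma.
by exists [set x in t]; apply: LGrundy_dom_set_of_Lseq; rewrite ?size_tuple.
Qed.

Lemma LGrundy_dom_set_full A :
  gamma_grL e = #|T| -> is_LGrundy_dom_set e A -> A = setT.
Proof.
move=> gammaT /existsP[t /andP[Lt /eqP <-]].
apply/eqP; rewrite eqEcard subsetT cardsT cardsE.
by rewrite /= (card_uniqP (Lseq_uniq Lt)) size_tuple gammaT.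
Qed.

Lemma LGrundy_dom_sets_differ :
  gamma_grL e < #|T| ->
  exists A B, [/\ is_LGrundy_dom_set e A, is_LGrundy_dom_set e B & A != B].
Proof.
move=> lt_gamma_T; have [t Lt] := exists_Lseq_gamma.
have [u u_notin_t] : exists u, u \notin t.
  apply/existsP; rewrite -negb_forall; apply: contraL lt_gamma_T => /forallP t_all.
  rewrite -leqNgt -(size_tuple t) cardE.
  by apply: uniq_leq_size (enum_uniq _) _ => x _.
have [|s [Ls size_s s_u]] := Lseq_exchange Lt u_notin_t.
  by apply: closedN_covered; rewrite ?size_tuple.
exists [set x in t], [set x in s]; split.
- by apply: LGrundy_dom_set_of_Lseq; rewrite ?size_tuple.
- by apply: LGrundy_dom_set_of_Lseq; rewrite ?size_s ?size_tuple.
- by apply/negP => /eqP/setP/(_ u); rewrite !inE s_u (negbTE u_notin_t).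
Qed.

End LSequences.

Theorem corollary6p3 (T : finType) (e : rel T) :
  simple_graph e ->
  ((exists! A : {set T}, is_LGrundy_dom_set e A) <-> gamma_grL e = #|T|).
Proof.
move=> _; split.
  case=> A [_ unique_A]; apply/eqP; rewrite eqn_leq gamma_grL_le_card leqNgt /=.
  apply/negP => /LGrundy_dom_sets_differ[B [C [LB LC]]].
  by rewrite -(unique_A _ LB) -(unique_A _ LC) eqxx.
move=> gammaT; have [A LA] := LGrundy_dom_set_exists e.
exists A; split => // B LB.
by rewrite (LGrundy_dom_set_full gammaT LA) (LGrundy_dom_set_full gammaT LB).
Qed.
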